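(* Let $Q_{\boldsymbol{X}}$ be a probability distribution on a covariate space $\mathcal{X}$ and let $L_2(Q_{\boldsymbol{X}})$ be the space of square-integrable measurable functions with respect to $Q_{\boldsymbol{X}}$. Suppose that the model class $\mathcal{F}\subset L_2(Q_{\boldsymbol{X}})$ is convex and contains all site-specific CATEs, i.e. $\tau^{(s)}\in\mathcal{F}$ for all $s\in\{1,\ldots,S\}$. Then the oracle minimax regret CATE \[ f_{\text{regret}}^*(\cdot)=\underset{f\in\mathcal{F}}{\arg\min}\ \max_{Q\in\mathcal{C}(Q_{\boldsymbol{X}})}\Big\{\mathbb{E}_Q\big[(Y(1)-Y(0)-f(\boldsymbol{X}))^2\big]-\min_{f'\in\mathcal{F}}\mathbb{E}_Q\big[(Y(1)-Y(0)-f'(\boldsymbol{X}))^2\big]\Big\} \] can be identified as \[ f_{\text{regret}}^*(\cdot)=\sum_{s=1}^S q_s^*\,\tau^{(s)}(\cdot)\quad\text{with}\quad \boldsymbol{q}^*=\underset{\boldsymbol{q}\in\Delta_{S-1}}{\arg\min}\ \boldsymbol{q}^\top\Gamma\boldsymbol{q}-\boldsymbol{q}^\top\boldsymbol{d}, \] where $\Gamma$ is the $S\times S$ matrix with entries $\Gamma_{k,l}=\mathbb{E}_{Q_{\boldsymbol{X}}}[\tau^{(k)}(\boldsymbol{X})\tau^{(l)}(\boldsymbol{X})]$ for $k,l\in\{1,\ldots,S\}$, and $\boldsymbol{d}=(\Gamma_{1,1},\ldots,\Gamma_{S,S})^\top$ is its diagonal vector.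
   Context: Setting: there are $S$ source sites; site $s$ has a joint distribution $P^{(s)}$ of binary-treatment potential outcomes $(Y(1),Y(0))$ (real-valued) and covariates $\boldsymbol{X}\in\mathcal{X}$, with site-specific conditional average treatment effect (CATE) $\tau^{(s)}(\boldsymbol{x})=\mathbb{E}_{P^{(s)}}[Y(1)-Y(0)\mid \boldsymbol{X}=\boldsymbol{x}]$. For a joint distribution $Q$ of $(Y(1),Y(0),\boldsymbol{X})$, $\tau_Q(\boldsymbol{x})=\mathbb{E}_Q[Y(1)-Y(0)\mid\boldsymbol{X}=\boldsymbol{x}]$. $\Delta_{S-1}=\{\boldsymbol{q}\in\mathbb{R}^S:\sum_s q_s=1,\ \min_s q_s\ge 0\}$. The multisite uncertainty set is $\mathcal{C}(Q_{\boldsymbol{X}})=\{Q=(Q_{\boldsymbol{X}},Q_{(Y(1),Y(0))\mid\boldsymbol{X}}):\ \tau_Q(\cdot)=\sum_{s=1}^S q_s\tau^{(s)}(\cdot)\text{ for some }\boldsymbol{q}\in\Delta_{S-1}\}$, i.e. all joint distributions with covariate marginal $Q_{\boldsymbol{X}}$ whose CATE is a convex combination of the site CATEs. *)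

From HB Require Import structures.
From mathcomp Require Import all_boot all_order all_algebra.
From mathcomp Require Import all_classical all_reals all_analysis.
Set Implicit Arguments. Unset Strict Implicit. Unset Printing Implicit Defensive.
Import Order.TTheory GRing.Theory Num.Theory.
Local Open Scope classical_set_scope.
Local Open Scope ring_scope.
Local Open Scope ereal_scope.

Definition L2 d (X : measurableType d) (R : realType) (QX : probability X R)
  : set (X -> R) :=
  [set f : X -> R | measurable_fun setT f /\ QX.-integrable setT (fun x => ((f x) ^+ 2)%:E)].

(* A joint distribution Q of (Y(1),Y(0),X) with covariate marginal QX is given by
   its conditional law Q_{(Y(1),Y(0))|X}, a probability kernel from X to R*R.
   E_Q[h] for h : R -> R -> X -> R. *)
Definition EQ d (X : measurableType d) (R : realType) (QX : probability X R)
  (k : R.-pker X ~> (R * R)%type) (h : R -> R -> X -> R) : \bar R :=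
  \int[QX]_x \int[k x]_y (h y.1 y.2 x)%:E.

Definition tauQ d (X : measurableType d) (R : realType)
  (k : R.-pker X ~> (R * R)%type) (x : X) : \bar R :=
  \int[k x]_y (y.1 - y.2)%:E.

Definition simplex (R : realType) (S : nat) : set ('I_S -> R) :=
  [set q | (forall s, 0 <= q s)%R /\ (\sum_(s < S) q s = 1)%R].

Definition mix (R : realType) (S : nat) T (tau : 'I_S -> T -> R) (q : 'I_S -> R)
  : T -> R := fun x => (\sum_(s < S) q s * tau s x)%R.

Definition C d (X : measurableType d) (R : realType) (QX : probability X R)
  (S : nat) (tau : 'I_S -> X -> R) : set (R.-pker X ~> (R * R)%type) :=
  [set k | EQ QX k (fun y1 _ _ => (y1 ^+ 2)%R) < +oo /\
           EQ QX k (fun _ y0 _ => (y0 ^+ 2)%R) < +oo /\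
           exists2 q, simplex q &
             {ae QX, forall x, tauQ k x = (mix tau q x)%:E}].

Definition mse d (X : measurableType d) (R : realType) (QX : probability X R)
  (k : R.-pker X ~> (R * R)%type) (f : X -> R) : \bar R :=
  EQ QX k (fun y1 y0 x => (y1 - y0 - f x) ^+ 2)%R.

Definition regret d (X : measurableType d) (R : realType) (QX : probability X R)
  (F : set (X -> R)) (k : R.-pker X ~> (R * R)%type) (f : X -> R) : \bar R :=
  mse QX k f - ereal_inf [set mse QX k f' | f' in F].

Definition worst_regret d (X : measurableType d) (R : realType)
  (QX : probability X R) (S : nat) (tau : 'I_S -> X -> R) (F : set (X -> R))
  (f : X -> R) : \bar R :=
  ereal_sup [set regret QX F k f | k in C QX tau].

Definition Gamma d (X : measurableType d) (R : realType) (QX : probability X R)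
  (S : nat) (tau : 'I_S -> X -> R) (k l : 'I_S) : R :=
  fine (\int[QX]_x (tau k x * tau l x)%:E).

Definition qobj d (X : measurableType d) (R : realType) (QX : probability X R)
  (S : nat) (tau : 'I_S -> X -> R) (q : 'I_S -> R) : R :=
  (\sum_(k < S) \sum_(l < S) q k * Gamma QX tau k l * q l
   - \sum_(k < S) q k * Gamma QX tau k k)%R.

From HB Require Import structures.
From mathcomp Require Import all_boot all_order all_algebra.
From mathcomp Require Import all_classical all_reals all_analysis.
From mathcomp Require Import ring lra.
Set Implicit Arguments. Unset Strict Implicit. Unset Printing Implicit Defensive.
Import Order.TTheory GRing.Theory Num.Theory measurable_realfun.
Local Open Scope classical_set_scope.
Local Open Scope ring_scope.
Local Open Scope ereal_scope.

(** Write [m_q = \sum_s q_s tau_s] and [J(q) = q^T Gamma q - q^T d].  If the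
   CATE of a law [Q] is [m_q], the bias-variance decomposition of the mean
   squared error shows that the infimum over [F] is attained at [m_q] and that
   the regret of [f] is at most [|f - m_q|^2]; the deterministic law
   [(Y(1), Y(0)) = (tau_s(X), 0)] has regret exactly [|f - tau_s|^2].  Expanding
   the squares gives [\sum_s q_s |f - tau_s|^2 = |f - m_q|^2 - J(q)], so
   [J <= 0] on the simplex, and the first-order optimality of the minimiser
   [qstar] along the segments towards the vertices yields
   [|m_qstar - tau_s|^2 <= - J(qstar)].  Hence the worst-case regret of
   [m_qstar] is at most [- J(qstar)], while that of any [f] in [F] is at least
   [|f - m_qstar|^2 - J(qstar)]. *)

Section simplex.
Context (R : realType) (S : nat).
Implicit Types (q a : 'I_S -> R).

Lemma sum_vertex (s : 'I_S) (F : 'I_S -> R) : (\sum_(k < S) (k == s)%:R * F k)%R = F s.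
Proof.
by rewrite (bigD1 s) //= eqxx mul1r big1 ?addr0 // => k /negbTE ->; rewrite mul0r.
Qed.

Lemma simplex_vertex (s : 'I_S) : simplex (fun k => (k == s)%:R : R).
Proof.
split=> [k|]; first exact: ler0n.
by rewrite -[RHS](sum_vertex s (fun=> 1%R)); apply: eq_bigr => k _; rewrite mulr1.
Qed.

Lemma simplex_segment q (s : 'I_S) (t : R) : simplex q -> (0 <= t <= 1)%R ->
  simplex (fun k => (1 - t) * q k + t * (k == s)%:R)%R.
Proof.
case=> q0 q1 /andP[t0 t1]; split=> [k|].
  by rewrite addr_ge0 ?mulr_ge0 ?subr_ge0.
by rewrite big_split /= -!mulr_sumr q1 (simplex_vertex s).2 !mulr1 subrK.
Qed.

Lemma simplex_avg_le q a (c : R) : simplex q -> (forall s, a s <= c)%R ->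
  (\sum_(s < S) q s * a s <= c)%R.
Proof.
case=> q0 q1 ac; rewrite -[leRHS]mul1r -q1 mulr_suml.
by apply: ler_sum => s _; rewrite ler_wpM2l.
Qed.

Lemma simplex_avg_lee q a (w : \bar R) : simplex q -> (forall s, (a s)%:E <= w) ->
  (\sum_(s < S) q s * a s)%:E <= w.
Proof.
move=> sq; case: w => [c ac | _ | aw]; last 2 first.
- exact: leey.
- case: sq => _; rewrite big1 => [/eqP|s _]; first by rewrite eq_sym oner_eq0.
  by have := aw s; rewrite leeNy_eq.
by rewrite lee_fin; apply: simplex_avg_le => // s; rewrite -lee_fin.
Qed.

End simplex.

Lemma convex_set_sum (R : numFieldType) (M : lmodType R) (A : set (convex_lmodType M))
    (I : eqType) (r : seq I) (x : I -> M) (c : I -> R) :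
  convex_set A -> (forall i, A (x i)) -> (forall i, 0 <= c i)%R ->
  (\sum_(i <- r) c i = 1)%R -> A (\sum_(i <- r) c i *: x i)%R.
Proof.
move=> cA Ax; elim: r c => [|j r IHr] c c0.
  by rewrite big_nil => /eqP; rewrite eq_sym oner_eq0.
rewrite !big_cons; set m := (\sum_(i <- r) c i)%R => cjm.
have [m0|m_gt0] := eqVneq m 0%R.
  move/eqP: (m0); rewrite psumr_eq0 // => /allP cr0.
  rewrite big_seq big1 => [|i /cr0/implyP/(_ isT)/eqP ->]; last by rewrite scale0r.
  by rewrite addr0 -[c j]addr0 -m0 cjm scale1r.
have {m_gt0}m_gt0 : (0 < m)%R by rewrite lt_neqAle eq_sym m_gt0 sumr_ge0.
have cj1 : (c j <= 1)%R by rewrite -cjm lerDl ltW.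
have Ay : A (\sum_(i <- r) (c i / m) *: x i)%R.
  apply: IHr => [i|]; first by rewrite divr_ge0 // ltW.
  by rewrite -mulr_suml divff // gt_eqF.
have := cA _ _ (Itv01 (c0 j) cj1) (mem_set (Ax j)) (mem_set Ay).
rewrite inE /conv /=; congr A.
have -> : unstable.onem (c j) = m by rewrite /unstable.onem -cjm addrC addKr.
rewrite scaler_sumr; congr (_ + _)%R; apply: eq_bigr => i _.
by rewrite scalerA mulrCA divff ?mulr1 // gt_eqF.
Qed.

Lemma mixE (R : realType) (S : nat) T (tau : 'I_S -> T -> R) (q : 'I_S -> R) :
  mix tau q = (\sum_(s < S) q s *: tau s)%R.
Proof. by rewrite fct_sumE. Qed.

Lemma first_order_ge0 (R : realFieldType) (c M : R) :
  (forall t, 0 < t -> t <= 1 -> 0 <= t * c + t ^+ 2 * M)%R -> (0 <= c)%R.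
Proof.
move=> H; rewrite leNgt; apply/negP => c_lt0.
(* this choice of [t] makes [c + t * `|M|] equal to [t * c < 0] *)
have den_gt0 : (0 < `|M| - c)%R by rewrite subr_gt0 (lt_le_trans c_lt0).
set t := (- c / (`|M| - c))%R.
have t_gt0 : (0 < t)%R by rewrite divr_gt0 // oppr_gt0.
have t_le1 : (t <= 1)%R by rewrite ler_pdivrMr // mul1r; have := normr_ge0 M; lra.
have tM : (t * `|M| = t * c - c)%R.
  have : (t * (`|M| - c) = - c)%R by rewrite divfK // gt_eqF.
  by rewrite mulrBr; lra.
have t2M : (t ^+ 2 * M <= t ^+ 2 * c - t * c)%R.
  apply: (@le_trans _ _ (t ^+ 2 * `|M|)%R); first by rewrite ler_wpM2l ?sqr_ge0 // ler_norm.
  by rewrite expr2 -mulrA tM mulrBr mulrA.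
have : (t ^+ 2 * c < 0)%R by rewrite pmulr_rlt0 // exprn_gt0.
have := H t t_gt0 t_le1; lra.
Qed.

Section square_integrable.
Context d (T : measurableType d) (R : realType) (mu : {measure set T -> \bar R}).
Implicit Types f g h : T -> R.

Section Lfun_closure.
Variables (p : \bar R) (p1 : 1 <= p).

Lemma LfunZ (a : R) f : f \in Lfun mu p -> (a *: f)%R \in Lfun mu p.
Proof.
have [L0 LZ] := @Lfun_submod_closed _ T R mu p p1.
by move=> lf; rewrite -[(a *: f)%R]addr0; apply: LZ.
Qed.

Lemma LfunB f g : f \in Lfun mu p -> g \in Lfun mu p -> (f - g)%R \in Lfun mu p.
Proof.
have [_ LZ] := @Lfun_submod_closed _ T R mu p p1.
by move=> lf lg; rewrite addrC -scaleN1r; apply: LZ.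
Qed.

End Lfun_closure.

Lemma Lfun_measurable p f : f \in Lfun mu p -> measurable_fun setT f.
Proof. by move/sub_Lfun_mfun; rewrite inE. Qed.

Lemma sqr_integral_lty_Lfun2 f : measurable_fun setT f ->
  \int[mu]_x (f x ^+ 2)%:E < +oo -> f \in Lfun mu 2%:E.
Proof.
move=> mf f2_fin.
rewrite inE; apply/andP; split; first by rewrite inE.
rewrite inE /= /finite_norm; apply: (@lty_poweRy _ _ 2%R) => //.
rewrite powR_Lnorm //; under eq_integral => x _.
  rewrite /= powR_mulrn // real_normK ?num_real //; over.
exact: f2_fin.
Qed.

Lemma Lfun2_mul_integrable f g : f \in Lfun mu 2%:E -> g \in Lfun mu 2%:E ->
  mu.-integrable setT (EFin \o (fun x => f x * g x))%R.
Proof. by move=> lf lg; apply/Lfun1_integrable/Lfun2_mul_Lfun1. Qed.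

Lemma Lfun2_mulZ_integrable (a : R) f g : f \in Lfun mu 2%:E -> g \in Lfun mu 2%:E ->
  mu.-integrable setT (EFin \o (fun x => a * (f x * g x)))%R.
Proof. by move=> lf lg; apply/Lfun1_integrable/(LfunZ (lexx _) a)/Lfun2_mul_Lfun1. Qed.

Lemma Rintegral_sum I (r : seq I) (h : I -> T -> R) :
  (forall i, mu.-integrable setT (EFin \o h i)) ->
  (\int[mu]_x \sum_(i <- r) h i x)%R = (\sum_(i <- r) \int[mu]_x h i x)%R.
Proof.
move=> hi; rewrite /Rintegral; under eq_integral do rewrite -sumEFin.
rewrite integral_sum // -sum_fine // => i _; exact: integrable_fin_num (hi i).
Qed.

Definition sqdist f g : R := (\int[mu]_x ((f x - g x) ^+ 2))%R.

Lemma sqdist_ge0 f g : (0 <= sqdist f g)%R.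
Proof. by apply: Rintegral_ge0 => x _; exact: sqr_ge0. Qed.

Lemma sqdistxx f : sqdist f f = 0%R.
Proof.
rewrite /sqdist; under eq_Rintegral do rewrite subrr expr0n /=.
by rewrite Rintegral_cst // mul0r.
Qed.

Lemma sqdistE f g : f \in Lfun mu 2%:E -> g \in Lfun mu 2%:E ->
  \int[mu]_x ((f x - g x) ^+ 2)%:E = (sqdist f g)%:E.
Proof.
move=> lf lg; rewrite fineK //; apply: integrable_fin_num => //.
exact: (Lfun2_integrable_sqr (LfunB (lee1n 2) lf lg)).
Qed.

Lemma sqdist_eq0 f g : f \in Lfun mu 2%:E -> g \in Lfun mu 2%:E ->
  sqdist f g = 0%R -> {ae mu, forall x, f x = g x}.
Proof.
move=> lf lg fg0.
have mfg : measurable_fun setT (fun x => ((f x - g x) ^+ 2)%:E).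
  apply/measurable_EFinP; apply: measurable_funX; apply: measurable_funB.
  - exact: Lfun_measurable lf.
  - exact: Lfun_measurable lg.
have : \int[mu]_x `|((f x - g x) ^+ 2)%:E| = 0.
  under eq_integral do rewrite gee0_abs ?lee_fin ?sqr_ge0 //.
  by rewrite sqdistE // fg0.
move/(ae_eq_integral_abs mu measurableT mfg).1; apply: filterS => x /(_ Logic.I) /=.
by move=> /eqP; rewrite eqe sqrf_eq0 subr_eq0 => /eqP.
Qed.

Lemma Rintegral_sqr_lincomb (a b : R) f g : f \in Lfun mu 2%:E -> g \in Lfun mu 2%:E ->
  (\int[mu]_x ((a * f x + b * g x) ^+ 2) =
   a ^+ 2 * \int[mu]_x (f x * f x) + 2 * a * b * \int[mu]_x (f x * g x)
   + b ^+ 2 * \int[mu]_x (g x * g x))%R.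
Proof.
move=> lf lg.
rewrite -!RintegralZl //; try exact: Lfun2_mul_integrable.
rewrite -!RintegralD //; try exact: Lfun2_mulZ_integrable.
- by apply: eq_Rintegral => x _; ring.
- by apply/Lfun1_integrable/rpredD; apply/Lfun1_integrable; exact: Lfun2_mulZ_integrable.
Qed.

Lemma sqdist_expand f g : f \in Lfun mu 2%:E -> g \in Lfun mu 2%:E ->
  (sqdist f g = \int[mu]_x (f x * f x) - 2 * \int[mu]_x (f x * g x)
                + \int[mu]_x (g x * g x))%R.
Proof.
move=> lf lg; transitivity (\int[mu]_x ((1 * f x + (-1) * g x) ^+ 2))%R.
  by apply: eq_Rintegral => x _; congr (_ ^+ 2)%R; ring.
by rewrite Rintegral_sqr_lincomb //; ring.
Qed.

Lemma Rintegral_mulr_sum I (r : seq I) (c : I -> R) (h : I -> T -> R) g :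
  g \in Lfun mu 2%:E -> (forall i, h i \in Lfun mu 2%:E) ->
  (\int[mu]_x (g x * \sum_(i <- r) c i * h i x) =
   \sum_(i <- r) c i * \int[mu]_x (g x * h i x))%R.
Proof.
move=> lg lh.
transitivity (\int[mu]_x \sum_(i <- r) c i * (g x * h i x))%R.
  by apply: eq_Rintegral => x _; rewrite mulr_sumr; apply: eq_bigr => i _; rewrite mulrCA.
rewrite Rintegral_sum => [|i]; last exact: Lfun2_mulZ_integrable.
by apply: eq_bigr => i _; rewrite RintegralZl //; exact: Lfun2_mul_integrable.
Qed.

End square_integrable.

Lemma integral_sqr_sub_mean d (T : measurableType d) (R : realType)
    (mu : {measure set T -> \bar R}) (h : T -> R) (a b : R) :
  mu setT = 1 -> h \in Lfun mu 2%:E -> \int[mu]_y (h y)%:E = b%:E ->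
  \int[mu]_y ((h y - a) ^+ 2)%:E = \int[mu]_y ((h y - b) ^+ 2)%:E + ((a - b) ^+ 2)%:E.
Proof.
move=> mu1 lh hb.
have lc (c : R) : cst c \in Lfun mu 2%:E.
  apply: sqr_integral_lty_Lfun2 => //; rewrite (_ : (fun x => _) = cst (c ^+ 2)%:E) //.
  by rewrite integral_cst // mu1 mule1 ltry.
have int1 f : f \in Lfun mu 2%:E -> mu.-integrable setT (EFin \o f).
  by move=> lf; apply/Lfun1_integrable; apply: Lfun_subset12 lf; rewrite mu1.
have lhb : (fun y => h y - b)%R \in Lfun mu 2%:E := LfunB (lee1n 2) lh (lc b).
rewrite (sqdistE lh (lc a)) (sqdistE lh (lc b)) -EFinD; congr EFin.
transitivity (\int[mu]_y ((1 * (h y - b) + (b - a) * 1) ^+ 2))%R.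
  by apply: eq_Rintegral => y _ /=; congr (_ ^+ 2)%R; ring.
rewrite (Rintegral_sqr_lincomb 1%R (b - a)%R lhb (lc 1%R)).
have -> : (\int[mu]_y ((h y - b) * 1))%R = 0%R.
  under eq_Rintegral do rewrite mulr1.
  rewrite (@RintegralB _ _ _ mu setT h (cst b)) ?int1 //.
  by rewrite Rintegral_cst // mu1 mulr1 /Rintegral hb subrr.
rewrite /sqdist; under [in RHS]eq_Rintegral do rewrite expr2.
rewrite (_ : (\int[mu]_y (1 * 1))%R = 1%R); last first.
  by rewrite mulr1 Rintegral_cst // mu1 mulr1.
ring.
Qed.

Lemma Lfun2_fst_sub_snd (R : realType) (mu : {measure set (R * R) -> \bar R}) :
  \int[mu]_y (y.1 ^+ 2)%:E < +oo -> \int[mu]_y (y.2 ^+ 2)%:E < +oo ->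
  (fun y : R * R => y.1 - y.2)%R \in Lfun mu 2%:E.
Proof.
move=> fst2 snd2.
have l1 : (fun y : R * R => y.1) \in Lfun mu 2%:E.
  by apply: sqr_integral_lty_Lfun2 fst2; exact: measurable_fst.
have l2 : (fun y : R * R => y.2) \in Lfun mu 2%:E.
  by apply: sqr_integral_lty_Lfun2 snd2; exact: measurable_snd.
exact: (LfunB (lee1n 2) l1 l2).
Qed.

Section kernel_mse.
Context d (X : measurableType d) (R : realType) (P : probability X R)
  (k : R.-pker X ~> (R * R)%type).

Lemma measurable_kernel_integral (h : X -> R * R -> R) :
  measurable_fun setT (fun z : X * (R * R) => h z.1 z.2) -> (forall x y, 0 <= h x y)%R ->
  measurable_fun setT (fun x => \int[k x]_y (h x y)%:E).
Proof.
move=> mh h0.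
apply: (measurable_fun_integral_finite_kernel (fun z : X * (R * R) => (h z.1 z.2)%:E) k).
  by move=> z; rewrite lee_fin.
exact/measurable_EFinP.
Qed.

Lemma kernel_integral_lty_ae (h : R * R -> R) :
  measurable_fun setT h -> (forall y, 0 <= h y)%R ->
  \int[P]_x \int[k x]_y (h y)%:E < +oo -> {ae P, forall x, \int[k x]_y (h y)%:E < +oo}.
Proof.
move=> mh h0 hfin.
have mkh : measurable_fun setT (fun x => \int[k x]_y (h y)%:E).
  by apply: (@measurable_kernel_integral (fun _ y => h y)) => //; exact: measurableT_comp.
have kh_ge0 x : 0 <= \int[k x]_y (h y)%:E by apply: integral_ge0 => y _; rewrite lee_fin.
have : P.-integrable setT (fun x => \int[k x]_y (h y)%:E).
  by apply/integrableP; split => //; under eq_integral do rewrite gee0_abs //.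
move/(integrable_ae measurableT); apply: filterS => x /(_ Logic.I).
by move/fin_numPlt/andP => [].
Qed.

Lemma measurable_cond_mse (u : X -> R) : measurable_fun setT u ->
  measurable_fun setT (fun x => \int[k x]_y ((y.1 - y.2 - u x) ^+ 2)%:E).
Proof.
move=> mu; apply: (@measurable_kernel_integral (fun x y => (y.1 - y.2 - u x) ^+ 2)%R).
  2: by move=> x y; exact: sqr_ge0.
apply: measurable_funX; apply: measurable_funB; last exact: measurableT_comp mu measurable_fst.
by apply: measurable_funB; apply: measurableT_comp measurable_snd;
  [exact: measurable_fst | exact: measurable_snd].
Qed.

Lemma mse_sqdist (g : X -> R) : g \in Lfun P 2%:E ->
  EQ P k (fun y1 _ _ => y1 ^+ 2)%R < +oo -> EQ P k (fun _ y0 _ => y0 ^+ 2)%R < +oo ->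
  {ae P, forall x, tauQ k x = (g x)%:E} ->
  forall f, f \in Lfun P 2%:E -> mse P k f = mse P k g + (sqdist P f g)%:E.
Proof.
move=> lg e1 e2 tq f lf.
have mf := Lfun_measurable lf; have mg := Lfun_measurable lg.
have mfg : measurable_fun setT (fun x => ((f x - g x) ^+ 2)%:E).
  by apply/measurable_EFinP; apply: measurable_funX; exact: measurable_funB.
rewrite /mse /EQ -sqdistE // -ge0_integralD //; first last.
- by move=> x _; rewrite lee_fin sqr_ge0.
- exact: measurable_cond_mse.
- by move=> x _; apply: integral_ge0 => y _; rewrite lee_fin sqr_ge0.
apply: ae_eq_integral => //.
- exact: measurable_cond_mse.
- by apply: emeasurable_funD => //; exact: measurable_cond_mse.
have m1 : measurable_fun setT (fun y : R * R => y.1 ^+ 2)%R.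
  by apply: measurable_funX; exact: measurable_fst.
have m2 : measurable_fun setT (fun y : R * R => y.2 ^+ 2)%R.
  by apply: measurable_funX; exact: measurable_snd.
apply: filterS3 (kernel_integral_lty_ae m1 (fun y => sqr_ge0 _) e1)
  (kernel_integral_lty_ae m2 (fun y => sqr_ge0 _) e2) tq => x k1 k2 kx _.
have l12 := Lfun2_fst_sub_snd k1 k2.
apply: (@integral_sqr_sub_mean _ _ _ (k x) (fun y => y.1 - y.2)%R) kx => //.
exact: prob_kernel.
Qed.

Lemma regret_le_sqdist (F : set (X -> R)) (g f : X -> R) :
  (forall f', F f' -> f' \in Lfun P 2%:E) -> g \in Lfun P 2%:E ->
  EQ P k (fun y1 _ _ => y1 ^+ 2)%R < +oo -> EQ P k (fun _ y0 _ => y0 ^+ 2)%R < +oo ->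
  {ae P, forall x, tauQ k x = (g x)%:E} ->
  f \in Lfun P 2%:E -> regret P F k f <= (sqdist P f g)%:E.
Proof.
move=> FL2 lg e1 e2 tq lf; have decomp := mse_sqdist lg e1 e2 tq.
have inf_ge : mse P k g <= ereal_inf [set mse P k f' | f' in F].
  apply: le_ereal_inf_tmp => _ [f' Ff' <-]; rewrite (decomp f' (FL2 _ Ff')).
  by rewrite leeDl // lee_fin sqdist_ge0.
apply: le_trans (leeB (lexx (mse P k f)) inf_ge) _.
rewrite (decomp f lf); case: (mse P k g) => [r| |].
- by rewrite addeAC subee // add0e.
- by rewrite addeNy leNye.
- by rewrite !addNye leNye.
Qed.

End kernel_mse.

Lemma L2_Lfun2 d (X : measurableType d) (R : realType) (P : probability X R) (f : X -> R) :
  L2 P f -> f \in Lfun P 2%:E.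
Proof. by case=> mf /(integrable_lty measurableT); exact: sqr_integral_lty_Lfun2. Qed.

Section minimax_regret.
Context d (X : measurableType d) (R : realType) (P : probability X R)
  (S : nat) (tau : 'I_S -> X -> R) (F : set (X -> R)).
Hypothesis tau_Lfun2 : forall s, tau s \in Lfun P 2%:E.

Lemma GammaE k l : Gamma P tau k l = (\int[P]_x (tau k x * tau l x))%R.
Proof. by []. Qed.

Lemma mix_Lfun2 q : mix tau q \in Lfun P 2%:E.
Proof.
(* [rpred_sum] finds the submodule structure of [Lfun P 2] only given [1 <= 2] *)
have p1 : (1 <= 2%:E :> \bar R) by rewrite lee1n.
by rewrite mixE rpred_sum // => s _; exact: (LfunZ p1 (q s) (tau_Lfun2 s)).
Qed.

Lemma qobjE q : qobj P tau q =
  (\int[P]_x (mix tau q x * mix tau q x)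
   - \sum_(s < S) q s * \int[P]_x (tau s x * tau s x))%R.
Proof.
rewrite /qobj; congr (_ - _)%R.
rewrite {2}/mix Rintegral_mulr_sum //; last exact: mix_Lfun2.
apply: eq_bigr => k _; under eq_Rintegral do rewrite mulrC.
rewrite /mix Rintegral_mulr_sum // mulr_sumr.
by apply: eq_bigr => l _; rewrite GammaE; ring.
Qed.

Lemma sum_sqdist_mix q f : simplex q -> f \in Lfun P 2%:E ->
  (\sum_(s < S) q s * sqdist P f (tau s) = sqdist P f (mix tau q) - qobj P tau q)%R.
Proof.
case=> _ q1 lf.
have fm : (\int[P]_x (f x * mix tau q x) = \sum_(s < S) q s * \int[P]_x (f x * tau s x))%R.
  exact: Rintegral_mulr_sum.
rewrite qobjE sqdist_expand ?mix_Lfun2 // fm.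
under eq_bigr do rewrite sqdist_expand //.
rewrite (eq_bigr (fun s => \int[P]_x (f x * f x) * q s - 2 * (q s * \int[P]_x (f x * tau s x))
                          + q s * \int[P]_x (tau s x * tau s x)))%R; last by move=> s _; ring.
by rewrite !big_split /= sumrN -!mulr_sumr q1; ring.
Qed.

Lemma qobj_le0 q : simplex q -> (qobj P tau q <= 0)%R.
Proof.
move=> sq; have := sum_sqdist_mix sq (mix_Lfun2 q); rewrite sqdistxx sub0r => sum_eq.
rewrite -oppr_ge0 -sum_eq; apply: sumr_ge0 => s _.
by apply: mulr_ge0; [case: sq | exact: sqdist_ge0].
Qed.

Lemma sqdist_argmin_vertex qs s : simplex qs ->
  (forall q, simplex q -> qobj P tau qs <= qobj P tau q)%R ->
  (sqdist P (mix tau qs) (tau s) <= - qobj P tau qs)%R.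
Proof.
move=> sqs qs_min; have lm := mix_Lfun2 qs; set m := mix tau qs in lm *.
set A := (\int[P]_x (m x * m x))%R; set B := (\int[P]_x (m x * tau s x))%R.
set C := (\int[P]_x (tau s x * tau s x))%R.
set D := (\sum_(k < S) qs k * \int[P]_x (tau k x * tau k x))%R.
have qobj_qs : qobj P tau qs = (A - D)%R by rewrite qobjE.
suff : (0 <= - 2 * A + 2 * B + D - C)%R.
  by rewrite sqdist_expand // qobj_qs -/A -/B -/C; lra.
apply: (@first_order_ge0 _ _ (A - 2 * B + C)%R) => t t_gt0 t_le1.
pose qt k := ((1 - t) * qs k + t * (k == s)%:R)%R.
have sqt : simplex qt by apply: simplex_segment => //; rewrite ltW.
have mix_qt : mix tau qt = (fun x => (1 - t) * m x + t * tau s x)%R.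
  apply/funext => x; rewrite /m /mix; under eq_bigr do rewrite mulrDl -!mulrA.
  by rewrite big_split /= -!mulr_sumr sum_vertex.
have qobj_qt : qobj P tau qt =
    ((1 - t) ^+ 2 * A + 2 * (1 - t) * t * B + t ^+ 2 * C - ((1 - t) * D + t * C))%R.
  rewrite qobjE mix_qt; under eq_Rintegral do rewrite -expr2.
  rewrite Rintegral_sqr_lincomb // -/A -/B -/C; congr (_ - _)%R.
  under eq_bigr do rewrite mulrDl -!mulrA.
  by rewrite big_split /= -!mulr_sumr sum_vertex.
have := qs_min _ sqt; rewrite qobj_qt qobj_qs -subr_ge0.
by congr (0 <= _)%R; ring.
Qed.

Let measurable_vertex s : measurable_fun setT (fun x => (tau s x, 0%R) : (R * R)%type).
Proof.
by apply: measurable_fun_pair; [exact: Lfun_measurable (tau_Lfun2 s) | exact: measurable_cst].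
Qed.

Definition vertex_kernel s : R.-pker X ~> (R * R)%type := kdirac (measurable_vertex s).

Lemma integral_vertex_kernel s x (h : R * R -> R) : measurable_fun setT h ->
  \int[vertex_kernel s x]_y (h y)%:E = (h (tau s x, 0%R))%:E.
Proof.
move=> mh; rewrite /= /kdirac integral_dirac ?diracT ?mul1e //.
exact/measurable_EFinP.
Qed.

Lemma mse_vertex_kernel s u : u \in Lfun P 2%:E ->
  mse P (vertex_kernel s) u = (sqdist P u (tau s))%:E.
Proof.
move=> lu; rewrite /mse /EQ -sqdistE //; apply: eq_integral => x _.
have mu : measurable_fun setT (fun y : R * R => (y.1 - y.2 - u x) ^+ 2)%R.
  apply: measurable_funX; apply: measurable_funB; last exact: measurable_cst.
  by apply: measurable_funB; [exact: measurable_fst | exact: measurable_snd].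
by rewrite (integral_vertex_kernel _ _ mu) /= subr0 -sqrrN opprB.
Qed.

Lemma vertex_kernel_in_C s : C P tau (vertex_kernel s).
Proof.
have m1 : measurable_fun setT (fun y : R * R => y.1 ^+ 2)%R.
  by apply: measurable_funX; exact: measurable_fst.
have m2 : measurable_fun setT (fun y : R * R => y.2 ^+ 2)%R.
  by apply: measurable_funX; exact: measurable_snd.
have mdiff : measurable_fun setT (fun y : R * R => y.1 - y.2)%R.
  by apply: measurable_funB; [exact: measurable_fst | exact: measurable_snd].
split; [|split].
- rewrite /EQ; under eq_integral => x _ do rewrite (integral_vertex_kernel _ _ m1).
  exact: integrable_lty (Lfun2_integrable_sqr (tau_Lfun2 s)).
- rewrite /EQ; under eq_integral => x _ do rewrite (integral_vertex_kernel _ _ m2) /= expr0n.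
  by rewrite integral0 ltry.
- exists (fun j => (j == s)%:R); first exact: simplex_vertex.
  apply: aeW => x.
  by rewrite /tauQ (integral_vertex_kernel _ _ mdiff) /= subr0 /mix sum_vertex.
Qed.

Lemma worst_regret_ge_vertex s f : F (tau s) -> f \in Lfun P 2%:E ->
  (sqdist P f (tau s))%:E <= worst_regret P tau F f.
Proof.
move=> Fs lf; apply: le_trans (ereal_sup_ubound (ex_intro2 _ _ _ (vertex_kernel_in_C s) erefl)).
rewrite /regret mse_vertex_kernel // -[X in X <= _]sube0; apply: leeB => //.
by apply: ereal_inf_lbound; exists (tau s) => //; rewrite mse_vertex_kernel // sqdistxx.
Qed.

Lemma worst_regret_le f (c : R) :
  (forall g, F g -> g \in Lfun P 2%:E) -> f \in Lfun P 2%:E ->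
  (forall q, simplex q -> sqdist P f (mix tau q) <= c)%R -> worst_regret P tau F f <= c%:E.
Proof.
move=> FL2 lf fc; apply: ge_ereal_sup => _ [k [e1 [e2 [q sq tq]]] <-].
apply: le_trans (regret_le_sqdist FL2 (mix_Lfun2 q) e1 e2 tq lf) _.
by rewrite lee_fin fc.
Qed.

End minimax_regret.

Theorem theorem1 (d : measure_display) (X : measurableType d) (R : realType)
  (QX : probability X R) (S : nat) (tau : 'I_S -> X -> R) (F : set (X -> R))
  (HFL2 : F `<=` L2 QX) (HFconv : convex_set F) (Htau : forall s, F (tau s))
  (qstar : 'I_S -> R) (Hqs : simplex qstar)
  (Hqmin : forall q, simplex q -> (qobj QX tau qstar <= qobj QX tau q)%R) :
  F (mix tau qstar) /\
  (forall f, F f -> worst_regret QX tau F (mix tau qstar) <= worst_regret QX tau F f) /\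
  (forall f, F f ->
     (forall g, F g -> worst_regret QX tau F f <= worst_regret QX tau F g) ->
     {ae QX, forall x, f x = mix tau qstar x}).
Proof.
have FL2 f : F f -> f \in Lfun QX 2%:E by move/HFL2/L2_Lfun2.
have tauL2 s := FL2 _ (Htau s).
have Ffs : F (mix tau qstar).
  by case: Hqs => q0 q1; rewrite mixE; exact: convex_set_sum.
have lfs := FL2 _ Ffs.
have upper : worst_regret QX tau F (mix tau qstar) <= (- qobj QX tau qstar)%:E.
  apply: worst_regret_le => // q sq.
  have := sum_sqdist_mix tauL2 sq lfs; have := qobj_le0 tauL2 sq.
  have := simplex_avg_le sq (fun s => sqdist_argmin_vertex tauL2 s Hqs Hqmin); lra.
have lower f : F f ->
    (sqdist QX f (mix tau qstar) - qobj QX tau qstar)%:E <= worst_regret QX tau F f.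
  move=> Ff; rewrite -(sum_sqdist_mix tauL2 Hqs (FL2 _ Ff)).
  apply: simplex_avg_lee => // s.
  exact: (worst_regret_ge_vertex tauL2 (Htau s) (FL2 _ Ff)).
split => //; split => [f Ff|f Ff fmin].
  apply: le_trans upper (le_trans _ (lower f Ff)).
  by rewrite lee_fin lerDr sqdist_ge0.
apply: sqdist_eq0 => //; first exact: FL2.
have := le_trans (lower f Ff) (le_trans (fmin _ Ffs) upper).
by rewrite lee_fin; have := sqdist_ge0 QX f (mix tau qstar); lra.
Qed.
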